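(* Let $\mathcal{FT}$ be the free nonsymmetric operad generated by five ternary operations $\omega_1,\dots,\omega_5$, written $\omega_i=(x,y,z)_i$, and let $d\colon\mathcal{FT}\to\mathcal{D}$ be the operad morphism into the dendriform operad defined on generators by \[ (x,y,z)_1\mapsto x\succ(y\prec z),\quad (x,y,z)_2\mapsto x\prec(y\prec z),\quad (x,y,z)_3\mapsto x\prec(y\succ z), \] \[ (x,y,z)_4\mapsto (x\succ y)\succ z,\quad (x,y,z)_5\mapsto (x\prec y)\succ z . \] (Its image is the Veronese square $\mathcal{D}^{[2]}$, the suboperad of $\mathcal{D}$ generated by $\mathcal{D}(3)$.) Then the kernel of the restriction $d\colon\mathcal{FT}(5)\to\mathcal{D}(5)$ (the space of quadratic relations satisfied by the five generating operations of $\mathcal{D}^{[2]}$) has dimension $33$, and the following 33 elements of $\mathcal{FT}(5)$ form a basis of it; i.e. every quadratic relation satisfied by the five generators is a linear combination of: \begin{align*} &((v,w,x)_4,y,z)_2 - (v,w,(x,y,z)_2)_4,\\ &((v,w,x)_5,y,z)_2 - (v,w,(x,y,z)_2)_5,\\ &((v,w,x)_4,y,z)_3 - (v,w,(x,y,z)_3)_4,\\ &((v,w,x)_5,y,z)_3 - (v,w,(x,y,z)_3)_5,\\ &((v,w,x)_1,y,z)_1 + ((v,w,x)_2,y,z)_1 - (v,(w,x,y)_5,z)_1,\\ &(v,(w,x,y)_1,z)_3 + (v,(w,x,y)_2,z)_3 - (v,w,(x,y,z)_5)_3,\\ &((v,w,x)_1,y,z)_4 + ((v,w,x)_2,y,z)_4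 - (v,(w,x,y)_5,z)_4,\\ &((v,w,x)_1,y,z)_1 + ((v,w,x)_4,y,z)_1 - (v,w,(x,y,z)_1)_4,\\ &(v,(w,x,y)_4,z)_2 + (v,(w,x,y)_5,z)_2 - (v,w,(x,y,z)_1)_3,\\ &((v,w,x)_4,y,z)_5 + ((v,w,x)_5,y,z)_5 - (v,(w,x,y)_1,z)_4,\\ &((v,w,x)_4,y,z)_5 + (v,(w,x,y)_2,z)_4 - (v,w,(x,y,z)_5)_4,\\ &(v,(w,x,y)_3,z)_1 - (v,w,(x,y,z)_1)_1 - (v,w,(x,y,z)_4)_1,\\ &(v,(w,x,y)_3,z)_2 - (v,w,(x,y,z)_1)_2 - (v,w,(x,y,z)_4)_2,\\ &((v,w,x)_3,y,z)_5 - (v,(w,x,y)_1,z)_5 - (v,(w,x,y)_4,z)_5,\\ &((v,w,x)_1,y,z)_2 - (v,w,(x,y,z)_1)_1 - (v,w,(x,y,z)_2)_1,\\ &((v,w,x)_3,y,z)_2 - (v,(w,x,y)_4,z)_2 - (v,w,(x,y,z)_2)_3,\\ &(v,(w,x,y)_1,z)_2 - (v,w,(x,y,z)_2)_3 - (v,w,(x,y,z)_3)_3,\\ &((v,w,x)_1,y,z)_5 - (v,(w,x,y)_2,z)_4 - (v,(w,x,y)_3,z)_4,\\ &(v,(w,x,y)_2,z)_1 - (v,w,(x,y,z)_2)_1 - (v,w,(x,y,z)_3)_1 - (v,w,(x,y,z)_5)_1,\\ &((v,w,x)_2,y,z)_2 - (v,(w,x,y)_5,z)_2 - (v,w,(x,y,z)_1)_2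 - (v,w,(x,y,z)_2)_2,\\ &(v,(w,x,y)_2,z)_2 - (v,w,(x,y,z)_2)_2 - (v,w,(x,y,z)_3)_2 - (v,w,(x,y,z)_5)_2,\\ &((v,w,x)_3,y,z)_3 - (v,(w,x,y)_1,z)_3 - (v,(w,x,y)_4,z)_3 - (v,w,(x,y,z)_3)_3,\\ &(v,(w,x,y)_3,z)_3 + (v,(w,x,y)_4,z)_3 + (v,(w,x,y)_5,z)_3 - (v,w,(x,y,z)_4)_3,\\ &((v,w,x)_3,y,z)_4 + ((v,w,x)_4,y,z)_4 + ((v,w,x)_5,y,z)_4 - (v,(w,x,y)_4,z)_4,\\ &((v,w,x)_1,y,z)_4 + ((v,w,x)_4,y,z)_4 + (v,(w,x,y)_3,z)_4 - (v,w,(x,y,z)_4)_4,\\ &((v,w,x)_2,y,z)_5 - (v,(w,x,y)_2,z)_5 - (v,(w,x,y)_3,z)_5 - (v,(w,x,y)_5,z)_5,\\ &((v,w,x)_5,y,z)_5 + (v,(w,x,y)_1,z)_5 + (v,(w,x,y)_2,z)_5 - (v,w,(x,y,z)_5)_5,\\ &((v,w,x)_2,y,z)_1 + ((v,w,x)_3,y,z)_1 + ((v,w,x)_5,y,z)_1 - (v,w,(x,y,z)_1)_5,\\ &(v,(w,x,y)_4,z)_1 + (v,(w,x,y)_5,z)_1 - (v,w,(x,y,z)_1)_4 - (v,w,(x,y,z)_1)_5,\\ &((v,w,x)_1,y,z)_3 - (v,(w,x,y)_2,z)_1 + (v,w,(x,y,z)_2)_1 - (v,w,(x,y,z)_4)_1,\\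 &(v,(w,x,y)_1,z)_1 - (v,w,(x,y,z)_2)_4 - (v,w,(x,y,z)_2)_5 - (v,w,(x,y,z)_3)_4 - (v,w,(x,y,z)_3)_5,\\ &((v,w,x)_2,y,z)_3 - (v,(w,x,y)_2,z)_2 - (v,(w,x,y)_2,z)_3 + (v,(w,x,y)_4,z)_3\\ &\qquad + (v,w,(x,y,z)_2)_2 - (v,w,(x,y,z)_4)_2 - (v,w,(x,y,z)_4)_3,\\ &((v,w,x)_2,y,z)_4 + ((v,w,x)_2,y,z)_5 - ((v,w,x)_4,y,z)_4 - (v,(w,x,y)_2,z)_5\\ &\qquad + (v,(w,x,y)_4,z)_4 + (v,(w,x,y)_4,z)_5 - (v,w,(x,y,z)_4)_5. \end{align*}
   Context: All operads are nonsymmetric, arity-graded, over a field of characteristic $0$ (e.g. $\mathbb{Q}$). The dendriform operad $\mathcal{D}$ is the nonsymmetric operad generated by two binary operations $\prec,\succ$ subject to \[ (x\succ y)\prec z = x\succ(y\prec z),\quad (x\prec y)\prec z = x\prec(y\prec z)+x\prec(y\succ z),\quad x\succ(y\succ z)=(x\succ y)\succ z+(x\prec y)\succ z . \] In $\mathcal{FT}$, the arity-5 component $\mathcal{FT}(5)$ has dimension 75 with basis the monomials $\omega_j\circ_k\omega_i$ ($1\le i,j\le5$, $k=1,2,3$), written with the variables $v,w,x,y,z$ in fixed left-to-right order as \[ ((v,w,x)_i,y,z)_j=\omega_j\circ_1\omega_i,\qquad (v,(w,x,y)_i,z)_j=\omega_j\circ_2\omega_i,\qquad (v,w,(x,y,z)_i)_j=\omega_j\circ_3\omega_i,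 \] where $\circ_k$ denotes partial composition into the $k$-th input. A relation is an element of $\mathcal{FT}(5)$ mapped to $0$ by $d$ (meaning the corresponding identity holds in every dendriform algebra, e.g. $((v,w,x)_4,y,z)_2\mapsto ((v\succ w)\succ x)\prec(y\prec z)$). *)

From mathcomp Require Import all_boot all_order all_algebra.
Set Implicit Arguments. Unset Strict Implicit. Unset Printing Implicit Defensive.
Import GRing.Theory.
Local Open Scope ring_scope.

Definition is_dendriform (F : fieldType) (A : lmodType F)
  (pr su : A -> A -> A) : Prop :=
  [/\ (forall (a : F) x y z, pr (a *: x + y) z = a *: pr x z + pr y z),
      (forall (a : F) x y z, pr x (a *: y + z) = a *: pr x y + pr x z),
      (forall (a : F) x y z, su (a *: x + y) z = a *: su x z + su y z),
      (forall (a : F) x y z, su x (a *: y + z) = a *: su x y + su x z) &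
   [/\ (forall x y z, pr (su x y) z = su x (pr y z)),
       (forall x y z, pr (pr x y) z = pr x (pr y z) + pr x (su y z)) &
       (forall x y z, su x (su y z) = su (su x y) z + su (pr x y) z)]].

(* The images d(omega_i) of the five ternary generators (0-based index i). *)
Definition dom (F : fieldType) (A : lmodType F) (pr su : A -> A -> A)
  (i : nat) (x y z : A) : A :=
  match i with
  | 0 => su x (pr y z)
  | 1 => pr x (pr y z)
  | 2 => pr x (su y z)
  | 3 => su (su x y) z
  | _ => su (pr x y) z
  end.

(* FT(5) is identified with 'rV[F]_75; the basis monomial
   omega_j \circ_k omega_i (k in 1..3, i,j in 1..5) has index
   (k-1)*25 + (j-1)*5 + (i-1). *)
Definition ftidx (k i j : nat) : 'I_75 := inord (k.-1 * 25 + j.-1 * 5 + i.-1).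

(* mon k i j = the basis monomial with inner generator i, outer generator j,
   the inner one plugged into position k:
   k = 1 : ((v,w,x)_i,y,z)_j ; k = 2 : (v,(w,x,y)_i,z)_j ; k = 3 : (v,w,(x,y,z)_i)_j *)
Definition mon (F : fieldType) (k i j : nat) : 'rV[F]_75 := delta_mx 0 (ftidx k i j).

Definition evalmon (F : fieldType) (A : lmodType F) (pr su : A -> A -> A)
  (m : 'I_75) (v w x y z : A) : A :=
  let k := (m %/ 25)%N in
  let j := ((m %% 25) %/ 5)%N in
  let i := (m %% 5)%N in
  match k with
  | 0 => dom pr su j (dom pr su i v w x) y z
  | 1 => dom pr su j v (dom pr su i w x y) z
  | _ => dom pr su j v w (dom pr su i x y z)
  end.

(* c : FT(5) lies in the kernel of d : FT(5) -> D(5), i.e. the corresponding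
   identity holds in every dendriform algebra over F. *)
Definition in_ker_d (F : fieldType) (c : 'rV[F]_75) : Prop :=
  forall (A : lmodType F) (pr su : A -> A -> A), is_dendriform pr su ->
  forall v w x y z : A, \sum_(m < 75) c 0 m *: evalmon pr su m v w x y z = 0.

Section Rels.
Variable F : fieldType.
Local Notation P1 i j := (mon F 1 i j).
Local Notation P2 i j := (mon F 2 i j).
Local Notation P3 i j := (mon F 3 i j).

Definition rels33 : seq 'rV[F]_75 := [::
  P1 4 2 - P3 2 4;
  P1 5 2 - P3 2 5;
  P1 4 3 - P3 3 4;
  P1 5 3 - P3 3 5;
  P1 1 1 + P1 2 1 - P2 5 1;
  P2 1 3 + P2 2 3 - P3 5 3;
  P1 1 4 + P1 2 4 - P2 5 4;
  P1 1 1 + P1 4 1 - P3 1 4;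
  P2 4 2 + P2 5 2 - P3 1 3;
  P1 4 5 + P1 5 5 - P2 1 4;
  P1 4 5 + P2 2 4 - P3 5 4;
  P2 3 1 - P3 1 1 - P3 4 1;
  P2 3 2 - P3 1 2 - P3 4 2;
  P1 3 5 - P2 1 5 - P2 4 5;
  P1 1 2 - P3 1 1 - P3 2 1;
  P1 3 2 - P2 4 2 - P3 2 3;
  P2 1 2 - P3 2 3 - P3 3 3;
  P1 1 5 - P2 2 4 - P2 3 4;
  P2 2 1 - P3 2 1 - P3 3 1 - P3 5 1;
  P1 2 2 - P2 5 2 - P3 1 2 - P3 2 2;
  P2 2 2 - P3 2 2 - P3 3 2 - P3 5 2;
  P1 3 3 - P2 1 3 - P2 4 3 - P3 3 3;
  P2 3 3 + P2 4 3 + P2 5 3 - P3 4 3;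
  P1 3 4 + P1 4 4 + P1 5 4 - P2 4 4;
  P1 1 4 + P1 4 4 + P2 3 4 - P3 4 4;
  P1 2 5 - P2 2 5 - P2 3 5 - P2 5 5;
  P1 5 5 + P2 1 5 + P2 2 5 - P3 5 5;
  P1 2 1 + P1 3 1 + P1 5 1 - P3 1 5;
  P2 4 1 + P2 5 1 - P3 1 4 - P3 1 5;
  P1 1 3 - P2 2 1 + P3 2 1 - P3 4 1;
  P2 1 1 - P3 2 4 - P3 2 5 - P3 3 4 - P3 3 5;
  P1 2 3 - P2 2 2 - P2 2 3 + P2 4 3 + P3 2 2 - P3 4 2 - P3 4 3;
  P1 2 4 + P1 2 5 - P1 4 4 - P2 2 5 + P2 4 4 + P2 4 5 - P3 4 5 ].

Definition relmx : 'M[F]_(33, 75) := \matrix_(r < 33) nth 0 rels33 r.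
End Rels.

(* Planar binary trees with labelled vertices, with Loday's products, form the free
   dendriform algebra.  Evaluating trees in an arbitrary dendriform algebra turns these
   products into the algebra's ones (this is where the three axioms are used), so every
   quadratic monomial expands into a sum of trees, and a relation whose positive and
   negative parts expand to the same multiset of trees holds in every dendriform algebra:
   the 33 relations lie in the kernel of d.  Conversely, trees with at most five vertices
   span the free dendriform algebra on one generator modulo degree > 5; evaluating at its
   generator gives an integer 75 x 64 matrix E with c E = 0 for every c in the kernel.
   Integer matrices Y and Z with R Y = 1 and Y R + E Z = 1, R the matrix of the
   relations, then show that R has rank 33 and that c E = 0 forces c = (c Y) R. *)

From HB Require Import structures.
From mathcomp Require Import all_boot all_order all_algebra.
Set Implicit Arguments. Unset Strict Implicit. Unset Printing Implicit Defensive.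
Import GRing.Theory.
Local Open Scope ring_scope.

(** * Planar binary trees and Loday's products *)

Inductive tree := Leaf | Node of tree & nat & tree.

Fixpoint tree_eqb (s t : tree) : bool :=
  match s, t with
  | Leaf, Leaf => true
  | Node sl m sr, Node tl n tr => [&& tree_eqb sl tl, m == n & tree_eqb sr tr]
  | _, _ => false
  end.

Lemma tree_eqP : Equality.axiom tree_eqb.
Proof.
elim=> [|sl IHl m sr IHr] [|tl n tr] /=; try by constructor.
apply: (iffP and3P) => [[/IHl -> /eqP -> /IHr ->] //|[<- <- <-]].
by split; [exact/IHl | exact/eqP | exact/IHr].
Qed.

HB.instance Definition _ := hasDecEq.Build tree tree_eqP.

Definition is_node (t : tree) : bool := if t is Node _ _ _ then true else false.

Fixpoint nodes (t : tree) : nat := if t is Node l _ r then (nodes l + nodes r).+1 else 0.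

(* Loday's products on trees x = x_l ∨ x_r: x ≺ y = x_l ∨ (x_r * y) and
   x ≻ y = (x * y_l) ∨ y_r, where x * y = x ≺ y + x ≻ y has the leaf as unit. *)
Fixpoint tstar (x : tree) : tree -> seq tree :=
  fix tstar_x (y : tree) : seq tree :=
  match x, y with
  | Leaf, _ => [:: y]
  | _, Leaf => [:: x]
  | Node xl a xr, Node yl b yr =>
      map (Node xl a) (tstar xr y) ++ map (fun t => Node t b yr) (tstar_x yl)
  end.

Definition tprec (x y : tree) : seq tree :=
  if x is Node xl a xr then map (Node xl a) (tstar xr y) else [::].

Definition tsucc (x y : tree) : seq tree :=
  if y is Node yl b yr then map (fun t => Node t b yr) (tstar x yl) else [::].

Lemma tstar_nodeE xl a xr yl b yr (x := Node xl a xr) (y := Node yl b yr) :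
  tstar x y = tprec x y ++ tsucc x y.
Proof. by []. Qed.

Lemma tstar0l y : tstar Leaf y = [:: y].
Proof. by case: y. Qed.

Lemma tstar0r x : tstar x Leaf = [:: x].
Proof. by case: x. Qed.

Lemma tstar_node x y : is_node x || is_node y -> all is_node (tstar x y).
Proof.
case: x => [|xl a xr]; case: y => [|yl b yr] //= _.
by rewrite all_cat !all_map; apply/andP; split; apply/allP.
Qed.

Definition tprod (keep : pred tree) (op : tree -> tree -> seq tree) (s1 s2 : seq tree) :
    seq tree :=
  flatten [seq op a b | a <- filter keep s1, b <- filter keep s2].

Section Monomials.
Variables (T : Type) (P S : T -> T -> T).

Definition domT (i : nat) (x y z : T) : T :=
  match i with
  | 0 => S x (P y z)
  | 1 => P x (P y z)
  | 2 => P x (S y z)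
  | 3 => S (S x y) z
  | _ => S (P x y) z
  end.

Definition evalmonT (m : nat) (v w x y z : T) : T :=
  let k := (m %/ 25)%N in
  let j := ((m %% 25) %/ 5)%N in
  let i := (m %% 5)%N in
  match k with
  | 0 => domT j (domT i v w x) y z
  | 1 => domT j v (domT i w x y) z
  | _ => domT j v w (domT i x y z)
  end.
End Monomials.

Lemma evalmonT_morph (T : Type) (P S : T -> T -> T) (F : fieldType) (A : lmodType F)
    (pr su : A -> A -> A) (h : T -> A) :
    {morph h : a b / P a b >-> pr a b} -> {morph h : a b / S a b >-> su a b} ->
  forall (m : 'I_75) v w x y z,
  h (evalmonT P S m v w x y z) = evalmon pr su m (h v) (h w) (h x) (h y) (h z).
Proof.
move=> hP hS m v w x y z.
have h_dom i a b c : h (domT P S i a b c) = dom pr su i (h a) (h b) (h c).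
  by case: i => [|[|[|[|i]]]] /=; rewrite ?(hP, hS).
by rewrite /evalmonT /evalmon; case: (m %/ 25)%N => [|[|k]]; rewrite !h_dom.
Qed.

Definition tvar (n : nat) : seq tree := [:: Node Leaf n Leaf].

Definition tree_mon (m : nat) : seq tree :=
  evalmonT (tprod is_node tprec) (tprod is_node tsucc) m
    (tvar 0) (tvar 1) (tvar 2) (tvar 3) (tvar 4).

(** * Evaluation of trees in a dendriform algebra *)

Section TreeEvaluation.
Variables (F : fieldType) (A : lmodType F) (pr su : A -> A -> A) (env : nat -> A).
Hypothesis dendA : is_dendriform pr su.

Fact pr_bilinear : bilinear_for *:%R *:%R pr.
Proof. by case: dendA => prL prR _ _ _; split=> ? ? ? ?; [exact: prL | exact: prR]. Qed.
Fact su_bilinear : bilinear_for *:%R *:%R su.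
Proof. by case: dendA => _ _ suL suR _; split=> ? ? ? ?; [exact: suL | exact: suR]. Qed.
HB.instance Definition _ := bilinear_isBilinear.Build F A A A *:%R *:%R pr pr_bilinear.
HB.instance Definition _ := bilinear_isBilinear.Build F A A A *:%R *:%R su su_bilinear.

Let su_pr x y z : pr (su x y) z = su x (pr y z).
Proof. by case: dendA => _ _ _ _ []. Qed.
Let pr_pr x y z : pr (pr x y) z = pr x (pr y z) + pr x (su y z).
Proof. by case: dendA => _ _ _ _ []. Qed.
Let su_su x y z : su x (su y z) = su (su x y) z + su (pr x y) z.
Proof. by case: dendA => _ _ _ _ []. Qed.

(* The vertex labelled n of the tree with subtrees l and r stands for
   l ≻ (env n ≺ r), empty subtrees being omitted. *)
Fixpoint evt (t : tree) : A :=
  if t is Node l n r then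
    let c := if r is Leaf then env n else pr (env n) (evt r) in
    if l is Leaf then c else su (evt l) c
  else 0.

Definition evs (s : seq tree) : A := \sum_(t <- s) evt t.

Definition graft_left (l : tree) (u : A) : A := if l is Leaf then u else su (evt l) u.

Lemma evt_nodeE l n r :
  evt (Node l n r) = graft_left l (if r is Leaf then env n else pr (env n) (evt r)).
Proof. by []. Qed.

Lemma pr_graft_left l u v : pr (graft_left l u) v = graft_left l (pr u v).
Proof. by case: l => //= *; rewrite su_pr. Qed.

Lemma pr_evt_node l n r v : pr (evt (Node l n r)) v =
  graft_left l (pr (env n) (if r is Leaf then v else pr (evt r) v + su (evt r) v)).
Proof. by rewrite evt_nodeE pr_graft_left; case: r => //= *; rewrite pr_pr linearDr. Qed.

Lemma su_evt_node u l n r : su u (evt (Node l n r)) =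
  su (if l is Leaf then u else pr u (evt l) + su u (evt l)) (evt (Node Leaf n r)).
Proof. by case: l => //= *; rewrite su_su linearDl addrC. Qed.

Lemma evs_cat s1 s2 : evs (s1 ++ s2) = evs s1 + evs s2.
Proof. exact: big_cat. Qed.

Lemma evs_map_node_right l n s : all is_node s ->
  evs (map (Node l n) s) = graft_left l (pr (env n) (evs s)).
Proof.
move=> /allP s_node; rewrite /evs big_map linear_sumr.
have -> : \sum_(t <- s) evt (Node l n t) = \sum_(t <- s) graft_left l (pr (env n) (evt t)).
  by apply: eq_big_seq => -[|? ? ?] /s_node.
by case: l => //= *; rewrite linear_sumr.
Qed.

Lemma evs_map_node_left n r s : all is_node s ->
  evs (map (fun t => Node t n r) s) = su (evs s) (evt (Node Leaf n r)).
Proof.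
move=> /allP s_node; rewrite /evs big_map linear_sumlz.
by apply: eq_big_seq => -[|? ? ?] /s_node.
Qed.

Lemma evs_tstar x y : evs (tstar x y) =
  if x is Leaf then evt y else if y is Leaf then evt x else pr (evt x) (evt y) + su (evt x) (evt y).
Proof.
elim: x y => [|xl _ a xr IHr] y; first by rewrite tstar0l /evs big_seq1.
elim: y => [|yl IHl b yr _]; first by rewrite tstar0r /evs big_seq1.
rewrite tstar_nodeE evs_cat [X in _ = X + _]pr_evt_node [X in _ = _ + X]su_evt_node.
congr (_ + _); first by rewrite evs_map_node_right ?tstar_node ?orbT // IHr; case: (xr).
by rewrite /tsucc evs_map_node_left ?tstar_node // IHl.
Qed.

Lemma evs_tprec x y : is_node y -> evs (tprec x y) = pr (evt x) (evt y).
Proof.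
case: x => [|xl a xr] y_node; first by rewrite /evs big_nil linear0l.
rewrite evs_map_node_right ?tstar_node ?y_node ?orbT // evs_tstar pr_evt_node.
by case: y y_node; case: xr.
Qed.

Lemma evs_tsucc x y : is_node x -> evs (tsucc x y) = su (evt x) (evt y).
Proof.
case: y => [|yl b yr] x_node; first by rewrite /evs big_nil linear0r.
rewrite /tsucc evs_map_node_left ?tstar_node ?x_node // evs_tstar [RHS]su_evt_node.
by case: x x_node; case: yl.
Qed.

Lemma evs_filter_node s : evs (filter is_node s) = evs s.
Proof. by rewrite /evs big_filter big_mkcond; apply: eq_bigr => -[]. Qed.

Lemma evs_tprod (B : {bilinear A -> A -> A}) op s1 s2 :
  (forall a b, is_node a -> is_node b -> evs (op a b) = B (evt a) (evt b)) ->
  evs (tprod is_node op s1 s2) = B (evs s1) (evs s2).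
Proof.
move=> opB; rewrite -[evs s1]evs_filter_node -[evs s2]evs_filter_node.
rewrite /evs big_flatten /= big_allpairs_dep linear_sumlz; apply: eq_big_seq => a.
rewrite mem_filter linear_sumr => /andP[a_node _]; apply: eq_big_seq => b.
by rewrite mem_filter => /andP[b_node _]; exact: opB.
Qed.

Lemma evs_tprod_prec s1 s2 : evs (tprod is_node tprec s1 s2) = pr (evs s1) (evs s2).
Proof. by apply: (evs_tprod (B := pr)) => a b _; exact: evs_tprec. Qed.

Lemma evs_tprod_succ s1 s2 : evs (tprod is_node tsucc s1 s2) = su (evs s1) (evs s2).
Proof. by apply: (evs_tprod (B := su)) => a b a_node _; exact: evs_tsucc. Qed.

Lemma evalmon_tree_mon (m : 'I_75) :
  evalmon pr su m (env 0) (env 1) (env 2) (env 3) (env 4) = evs (tree_mon m).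
Proof.
have evs_tvar n : evs (tvar n) = env n by rewrite /evs big_seq1.
by rewrite -!evs_tvar -(evalmonT_morph evs_tprod_prec evs_tprod_succ).
Qed.
End TreeEvaluation.

(** * The 33 relations lie in the kernel *)

(* [(true, (k, i, j))] stands for [mon k i j] and [(false, (k, i, j))] for its opposite. *)
Definition rel_terms : seq (seq (bool * (nat * nat * nat))) := [::
  [:: (true, (1, 4, 2)); (false, (3, 2, 4))];
  [:: (true, (1, 5, 2)); (false, (3, 2, 5))];
  [:: (true, (1, 4, 3)); (false, (3, 3, 4))];
  [:: (true, (1, 5, 3)); (false, (3, 3, 5))];
  [:: (true, (1, 1, 1)); (true, (1, 2, 1)); (false, (2, 5, 1))];
  [:: (true, (2, 1, 3)); (true, (2, 2, 3)); (false, (3, 5, 3))];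
  [:: (true, (1, 1, 4)); (true, (1, 2, 4)); (false, (2, 5, 4))];
  [:: (true, (1, 1, 1)); (true, (1, 4, 1)); (false, (3, 1, 4))];
  [:: (true, (2, 4, 2)); (true, (2, 5, 2)); (false, (3, 1, 3))];
  [:: (true, (1, 4, 5)); (true, (1, 5, 5)); (false, (2, 1, 4))];
  [:: (true, (1, 4, 5)); (true, (2, 2, 4)); (false, (3, 5, 4))];
  [:: (true, (2, 3, 1)); (false, (3, 1, 1)); (false, (3, 4, 1))];
  [:: (true, (2, 3, 2)); (false, (3, 1, 2)); (false, (3, 4, 2))];
  [:: (true, (1, 3, 5)); (false, (2, 1, 5)); (false, (2, 4, 5))];
  [:: (true, (1, 1, 2)); (false, (3, 1, 1)); (false, (3, 2, 1))];
  [:: (true, (1, 3, 2)); (false, (2, 4, 2)); (false, (3, 2, 3))];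
  [:: (true, (2, 1, 2)); (false, (3, 2, 3)); (false, (3, 3, 3))];
  [:: (true, (1, 1, 5)); (false, (2, 2, 4)); (false, (2, 3, 4))];
  [:: (true, (2, 2, 1)); (false, (3, 2, 1)); (false, (3, 3, 1)); (false, (3, 5, 1))];
  [:: (true, (1, 2, 2)); (false, (2, 5, 2)); (false, (3, 1, 2)); (false, (3, 2, 2))];
  [:: (true, (2, 2, 2)); (false, (3, 2, 2)); (false, (3, 3, 2)); (false, (3, 5, 2))];
  [:: (true, (1, 3, 3)); (false, (2, 1, 3)); (false, (2, 4, 3)); (false, (3, 3, 3))];
  [:: (true, (2, 3, 3)); (true, (2, 4, 3)); (true, (2, 5, 3)); (false, (3, 4, 3))];
  [:: (true, (1, 3, 4)); (true, (1, 4, 4)); (true, (1, 5, 4)); (false, (2, 4, 4))];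
  [:: (true, (1, 1, 4)); (true, (1, 4, 4)); (true, (2, 3, 4)); (false, (3, 4, 4))];
  [:: (true, (1, 2, 5)); (false, (2, 2, 5)); (false, (2, 3, 5)); (false, (2, 5, 5))];
  [:: (true, (1, 5, 5)); (true, (2, 1, 5)); (true, (2, 2, 5)); (false, (3, 5, 5))];
  [:: (true, (1, 2, 1)); (true, (1, 3, 1)); (true, (1, 5, 1)); (false, (3, 1, 5))];
  [:: (true, (2, 4, 1)); (true, (2, 5, 1)); (false, (3, 1, 4)); (false, (3, 1, 5))];
  [:: (true, (1, 1, 3)); (false, (2, 2, 1)); (true, (3, 2, 1)); (false, (3, 4, 1))];
  [:: (true, (2, 1, 1)); (false, (3, 2, 4)); (false, (3, 2, 5)); (false, (3, 3, 4));
      (false, (3, 3, 5))];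
  [:: (true, (1, 2, 3)); (false, (2, 2, 2)); (false, (2, 2, 3)); (true, (2, 4, 3));
      (true, (3, 2, 2)); (false, (3, 4, 2)); (false, (3, 4, 3))];
  [:: (true, (1, 2, 4)); (true, (1, 2, 5)); (false, (1, 4, 4)); (false, (2, 2, 5));
      (true, (2, 4, 4)); (true, (2, 4, 5)); (false, (3, 4, 5))]].

Definition term_idx (q : bool * (nat * nat * nat)) : nat :=
  let: (_, (k, i, j)) := q in (k.-1 * 25 + j.-1 * 5 + i.-1)%N.

Definition rel_trees (pos : bool) (l : seq (bool * (nat * nat * nat))) : seq tree :=
  flatten [seq tree_mon (term_idx q) | q <- l & q.1 == pos].

Lemma rel_terms_balanced :
  all (fun l => perm_eq (rel_trees true l) (rel_trees false l)) rel_terms.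
Proof. by vm_compute. Qed.

Lemma rel_terms_idx : all (fun q => term_idx q < 75)%N (flatten rel_terms).
Proof. by []. Qed.

Section RowCombinations.
Variable F : fieldType.

Definition row_comb (V : lmodType F) n (c : 'rV[F]_n) (f : 'I_n -> V) : V :=
  \sum_(m < n) c 0 m *: f m.

Lemma row_comb_sum (V : lmodType F) n I (r : seq I) (c : I -> 'rV_n) (f : 'I_n -> V) :
  row_comb (\sum_(i <- r) c i) f = \sum_(i <- r) row_comb (c i) f.
Proof.
rewrite /row_comb exchange_big /=; apply: eq_bigr => m _.
by rewrite summxE scaler_suml.
Qed.

Lemma row_combN (V : lmodType F) n (c : 'rV_n) (f : 'I_n -> V) :
  row_comb (- c) f = - row_comb c f.
Proof. by rewrite /row_comb -sumrN; apply: eq_bigr => m _; rewrite mxE scaleNr. Qed.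

Lemma row_comb_delta (V : lmodType F) n (j : 'I_n) (f : 'I_n -> V) : row_comb 'e_j f = f j.
Proof.
rewrite /row_comb (bigD1 j) //= big1 ?addr0; first by rewrite mxE !eqxx scale1r.
by move=> m /negbTE m_j; rewrite mxE m_j andbF scale0r.
Qed.

Lemma row_comb_mul (V : lmodType F) k n (u : 'rV_k) (M : 'M_(k, n)) (f : 'I_n -> V) :
  row_comb (u *m M) f = row_comb u (fun r => row_comb (row r M) f).
Proof.
rewrite /row_comb; under eq_bigr do rewrite mxE scaler_suml.
rewrite exchange_big /=; apply: eq_bigr => r _.
by rewrite scaler_sumr; apply: eq_bigr => m _; rewrite mxE scalerA.
Qed.
End RowCombinations.

Section RelationRows.
Variable F : fieldType.

Definition signed_mon (q : bool * (nat * nat * nat)) : 'rV[F]_75 :=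
  let: (pos, (k, i, j)) := q in if pos then mon F k i j else - mon F k i j.

Definition rel_row (l : seq (bool * (nat * nat * nat))) : 'rV[F]_75 :=
  if l is q :: l' then foldl (fun u q => u + signed_mon q) (signed_mon q) l' else 0.

Lemma rels33_terms : rels33 F = map rel_row rel_terms.
Proof. by []. Qed.

Lemma rel_rowE l : rel_row l = \sum_(q <- l) signed_mon q.
Proof.
case: l => [|q l]; first by rewrite big_nil.
rewrite /= big_cons; elim: l (signed_mon q) => [|q' l IHl] u /=; first by rewrite big_nil addr0.
by rewrite IHl big_cons addrA.
Qed.

Lemma row_comb_signed_mon (V : lmodType F) q (f : 'I_75 -> V) :
  row_comb (signed_mon q) f =
  if q.1 then f (inord (term_idx q)) else - f (inord (term_idx q)).
Proof. by case: q => -[] [[k i] j]; rewrite /= ?row_combN row_comb_delta. Qed.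

Lemma signed_mon_entry q (m : 'I_75) : (term_idx q < 75)%N ->
  signed_mon q 0 m = (if term_idx q == m then if q.1 then 1 else -1 else 0)%:~R.
Proof.
case: q => -[] [[k i] j] /= lt_q.
all: rewrite !mxE eqxx /ftidx -val_eqE /= inordK // eq_sym.
all: by case: eqP => _; rewrite /= ?mulr1n ?mulr0n ?mulr1z ?mulr0z ?mulrN1z ?oppr0.
Qed.
End RelationRows.

Lemma sum_signed (V : zmodType) (I : Type) (r : seq (bool * I)) (X : bool * I -> V) :
  \sum_(q <- r) (if q.1 then X q else - X q) =
  \sum_(q <- r | q.1 == true) X q - \sum_(q <- r | q.1 == false) X q.
Proof.
rewrite (bigID (fun q => q.1)) /= -sumrN; congr (_ + _).
all: by rewrite [LHS]big_mkcond [RHS]big_mkcond; apply: eq_bigr => -[[] ?].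
Qed.

Lemma evs_rel_trees (F : fieldType) (A : lmodType F) (pr su : A -> A -> A) env pos l :
  evs pr su env (rel_trees pos l) =
  \sum_(q <- l | q.1 == pos) evs pr su env (tree_mon (term_idx q)).
Proof. by rewrite /rel_trees /evs big_flatten big_map big_filter. Qed.

Lemma rel_row_ker (F : fieldType) l : l \in rel_terms -> in_ker_d (rel_row F l).
Proof.
move=> l_rel A pr su dendA v w x y z.
have lt_l : all (fun q => term_idx q < 75)%N l.
  by apply/allP=> q q_l; apply: (allP rel_terms_idx); apply/flattenP; exists l.
have balanced : perm_eq (rel_trees true l) (rel_trees false l).
  exact: (allP rel_terms_balanced).
set env := nth 0 [:: v; w; x; y; z].
have evalmon_env m : evalmon pr su m v w x y z = evs pr su env (tree_mon m).
  exact: evalmon_tree_mon.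
change (row_comb (rel_row F l) (fun m => evalmon pr su m v w x y z) = 0).
rewrite rel_rowE row_comb_sum.
under eq_big_seq => q q_l.
  rewrite row_comb_signed_mon !evalmon_env inordK; last exact: (allP lt_l).
  over.
rewrite sum_signed -!evs_rel_trees.
by rewrite /evs (perm_big _ balanced) subrr.
Qed.

Lemma in_ker_d_mulmx (F : fieldType) k (u : 'rV[F]_k) (M : 'M_(k, 75)) :
  (forall r, in_ker_d (row r M)) -> in_ker_d (u *m M).
Proof.
move=> rows_ker A pr su dendA v w x y z.
change (row_comb (u *m M) (fun m => evalmon pr su m v w x y z) = 0).
by rewrite row_comb_mul /row_comb big1 // => r _; rewrite (rows_ker r A pr su dendA) scaler0.
Qed.

Lemma relmx_row_ker (F : fieldType) r : in_ker_d (row r (relmx F)).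
Proof.
rewrite rowK rels33_terms (nth_map [::]) //.
by apply: rel_row_ker; rewrite mem_nth.
Qed.

(** * The free dendriform algebra modulo degree > 5 *)

Fixpoint trees_upto (n : nat) : seq (seq tree) :=
  if n is n'.+1 then
    let T := trees_upto n' in
    rcons T (flatten [seq [seq Node l 0 r | l <- nth [::] T k, r <- nth [::] T (n' - k)]
                     | k <- iota 0 n])
  else [:: [:: Leaf]].

Definition basis : seq tree := flatten (behead (trees_upto 5)).

Lemma size_basis : size basis = 64.
Proof. by vm_compute. Qed.

Lemma uniq_basis : uniq basis.
Proof. by vm_compute. Qed.

(* The free dendriform algebra on one generator modulo degree > 5: its basis is [basis],
   and products of total degree > 5 are dropped. *)
Definition trunc_op (op : tree -> tree -> seq tree) (a b : tree) : seq tree :=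
  if (nodes a + nodes b <= 5)%N then op a b else [::].

Definition mprec : seq tree -> seq tree -> seq tree := tprod (mem basis) (trunc_op tprec).
Definition msucc : seq tree -> seq tree -> seq tree := tprod (mem basis) (trunc_op tsucc).

Definition dendriform_at (P S : seq tree -> seq tree -> seq tree) (a b c : tree) : bool :=
  let: (x, y, z) := ([:: a], [:: b], [:: c]) in
  [&& perm_eq (P (S x y) z) (S x (P y z)),
      perm_eq (P (P x y) z) (P x (P y z) ++ P x (S y z)) &
      perm_eq (S x (S y z)) (S (S x y) z ++ S (P x y) z)].

(* [if] rather than [||]: [vm_compute] evaluates both arguments of [orb]. *)
Lemma basis_dendriform_check :
  all (fun a => all (fun b => all (fun c =>
    if (nodes a + nodes b + nodes c <= 5)%N then dendriform_at mprec msucc a b c else true)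
  basis) basis) basis.
Proof. by vm_compute. Qed.

Definition homog (n : nat) (s : seq tree) : bool := all (fun t => nodes t == n) s.

Lemma homog_tstar x y : homog (nodes x + nodes y) (tstar x y).
Proof.
elim: x y => [|xl _ a xr IHr] y; first by rewrite tstar0l /homog /= eqxx.
elim: y => [|yl IHl b yr _]; first by rewrite tstar0r /homog /= addn0 eqxx.
rewrite tstar_nodeE /homog all_cat !all_map; apply/andP; split.
  by apply/allP=> t /(allP (IHr _)) /eqP /= ->; rewrite !addSn !addnS addnA.
by apply/allP=> t /(allP IHl) /eqP /= ->; rewrite !addSn !addnS addnA.
Qed.

Lemma homog_tprec x y : homog (nodes x + nodes y) (tprec x y).
Proof.
case: x => [|xl a xr] //=; rewrite /homog all_map.
by apply/allP=> t /(allP (homog_tstar _ _)) /eqP /= ->; rewrite addSn addnA.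
Qed.

Lemma homog_tsucc x y : homog (nodes x + nodes y) (tsucc x y).
Proof.
case: y => [|yl b yr] //=; rewrite /homog all_map.
by apply/allP=> t /(allP (homog_tstar _ _)) /eqP /= ->; rewrite addnS addnA.
Qed.

Lemma mem_tprod keep op s1 s2 t : t \in tprod keep op s1 s2 ->
  exists a b, [/\ a \in s1, b \in s2 & t \in op a b].
Proof.
case/flattenP=> _ /allpairsP[[a b] [/= a_s1 b_s2 ->]] t_ab.
by exists a, b; rewrite (mem_filter keep a s1) (mem_filter keep b s2) in a_s1 b_s2;
  case/andP: a_s1 => _ ?; case/andP: b_s2 => _ ?.
Qed.

Lemma tprod_trunc_homog keep op n1 n2 s1 s2 :
    (forall a b, homog (nodes a + nodes b) (op a b)) -> homog n1 s1 -> homog n2 s2 ->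
  homog (n1 + n2) (tprod keep (trunc_op op) s1 s2) /\
  ((5 < n1 + n2)%N -> tprod keep (trunc_op op) s1 s2 = [::]).
Proof.
move=> op_homog /allP h1 /allP h2.
have nodes_t t : t \in tprod keep (trunc_op op) s1 s2 -> nodes t = (n1 + n2)%N /\ (n1 + n2 <= 5)%N.
  case/mem_tprod=> a [b [/h1/eqP a_n1 /h2/eqP b_n2]]; rewrite /trunc_op a_n1 b_n2.
  by case: leqP => // small /(allP (op_homog a b))/eqP; rewrite a_n1 b_n2.
split; first by apply/allP=> t /nodes_t[-> _].
move=> big; case: (tprod _ _ _ _) nodes_t => // t s /(_ t (mem_head t s))[_].
by rewrite leqNgt big.
Qed.

Lemma homog1 t : homog (nodes t) [:: t].
Proof. by rewrite /homog /= eqxx. Qed.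

Section HighDegree.
Variables (keep : pred tree) (op1 op2 : tree -> tree -> seq tree) (a b c : tree).
Hypotheses (op1_homog : forall x y, homog (nodes x + nodes y) (op1 x y))
           (op2_homog : forall x y, homog (nodes x + nodes y) (op2 x y)).
Hypothesis high : (5 < nodes a + nodes b + nodes c)%N.

Lemma tprod_trunc_nil_l :
  tprod keep (trunc_op op1) (tprod keep (trunc_op op2) [:: a] [:: b]) [:: c] = [::].
Proof.
have [hab _] := tprod_trunc_homog keep op2_homog (homog1 a) (homog1 b).
exact: (tprod_trunc_homog keep op1_homog hab (homog1 c)).2.
Qed.

Lemma tprod_trunc_nil_r :
  tprod keep (trunc_op op1) [:: a] (tprod keep (trunc_op op2) [:: b] [:: c]) = [::].
Proof.
have [hbc _] := tprod_trunc_homog keep op2_homog (homog1 b) (homog1 c).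
by apply: (tprod_trunc_homog keep op1_homog (homog1 a) hbc).2; rewrite addnA.
Qed.
End HighDegree.

Lemma dendriform_at_basis a b c : a \in basis -> b \in basis -> c \in basis ->
  dendriform_at mprec msucc a b c.
Proof.
move=> a_B b_B c_B; case: (leqP (nodes a + nodes b + nodes c) 5) => [low | high].
  by have := allP (allP (allP basis_dendriform_check a a_B) b b_B) c c_B; rewrite low.
by rewrite /dendriform_at /mprec /msucc !(tprod_trunc_nil_l, tprod_trunc_nil_r) //;
  exact: homog_tprec || exact: homog_tsucc.
Qed.

Definition gen : seq tree := tvar 0.

Definition model_mon (m : nat) : seq tree := evalmonT mprec msucc m gen gen gen gen gen.

Section Model.
Variable F : fieldType.
Local Notation vT := 'rV[F]_64.
Local Notation bas i := (nth Leaf basis i).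

Definition vec (s : seq tree) : vT := \row_(i < 64) (count_mem (bas i) s)%:R.

Definition bilin (op : tree -> tree -> seq tree) (u v : vT) : vT :=
  \sum_(i < 64) \sum_(j < 64) (u 0 i * v 0 j) *: vec (op (bas i) (bas j)).

Fact bilin_bilinear op : bilinear_for *:%R *:%R (bilin op).
Proof.
split=> [v|u] a x y /=; rewrite /bilin scaler_sumr -big_split; apply: eq_bigr => i _.
all: rewrite scaler_sumr -big_split; apply: eq_bigr => j _; rewrite !mxE scalerA.
  by rewrite mulrDl scalerDl -mulrA.
by rewrite mulrDr scalerDl mulrCA.
Qed.

HB.instance Definition _ op :=
  bilinear_isBilinear.Build F vT vT vT *:%R *:%R (bilin op) (bilin_bilinear op).

Local Notation vprec := (bilin (trunc_op tprec)).
Local Notation vsucc := (bilin (trunc_op tsucc)).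

Lemma vec_cat s1 s2 : vec (s1 ++ s2) = vec s1 + vec s2.
Proof. by apply/rowP => i; rewrite !mxE count_cat natrD. Qed.

Lemma vec_flatten ss : vec (flatten ss) = \sum_(s <- ss) vec s.
Proof.
elim: ss => [|s ss IHss]; last by rewrite big_cons vec_cat IHss.
by rewrite big_nil; apply/rowP => i; rewrite !mxE.
Qed.

Lemma vec_perm s1 s2 : perm_eq s1 s2 -> vec s1 = vec s2.
Proof. by move/permP=> eq_count; apply/rowP => i; rewrite !mxE eq_count. Qed.

Lemma vec_basis (i : 'I_64) : vec [:: bas i] = 'e_i.
Proof.
apply/rowP => j; rewrite !mxE /= addn0.
by rewrite (nth_uniq Leaf) ?size_basis ?uniq_basis // eq_sym.
Qed.

Lemma mem_bas (i : 'I_64) : bas i \in basis.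
Proof. by rewrite mem_nth ?size_basis. Qed.

Lemma vec_notin t : t \notin basis -> vec [:: t] = 0.
Proof.
move=> t_B; apply/rowP => i; rewrite !mxE /= addn0.
by case: eqP => // t_bas; case/negP: t_B; rewrite t_bas mem_bas.
Qed.

Lemma basis_nthP t : t \in basis -> exists i : 'I_64, t = bas i.
Proof.
move=> t_B; have lt_t : (index t basis < 64)%N by rewrite -index_mem size_basis in t_B.
by exists (Ordinal lt_t); rewrite nth_index.
Qed.

Lemma vec_filter s : vec s = \sum_(t <- filter (mem basis) s) vec [:: t].
Proof.
rewrite -[s in LHS]flatten_seq1 vec_flatten big_map big_filter [RHS]big_mkcond.
by apply: eq_bigr => t _; case: ifPn => // /vec_notin.
Qed.

Lemma bilin_basis op (i j : 'I_64) : bilin op 'e_i 'e_j = vec (op (bas i) (bas j)).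
Proof.
rewrite /bilin (bigD1 i) //= [X in _ + X]big1 ?addr0 => [|i' /negbTE i'_i]; last first.
  by rewrite big1 // => j' _; rewrite !mxE i'_i mul0r scale0r.
rewrite (bigD1 j) //= big1 ?addr0 => [|j' /negbTE j'_j]; last by rewrite !mxE j'_j mulr0 scale0r.
by rewrite !mxE !eqxx mulr1 scale1r.
Qed.

Lemma bilin_vec op s1 s2 : bilin op (vec s1) (vec s2) = vec (tprod (mem basis) op s1 s2).
Proof.
rewrite vec_flatten big_allpairs_dep (vec_filter s1) linear_sumlz.
apply: eq_big_seq => a; rewrite mem_filter => /andP[/basis_nthP[i ->] _].
rewrite (vec_filter s2) linear_sumr; apply: eq_big_seq => b.
by rewrite mem_filter => /andP[/basis_nthP[j ->] _]; rewrite !vec_basis; exact: bilin_basis.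
Qed.

Lemma bilin_expandl (B : {bilinear vT -> vT -> vT}) u v :
  B u v = \sum_(i < 64) u 0 i *: B 'e_i v.
Proof.
rewrite {1}(row_sum_delta u) linear_sumlz.
by apply: eq_bigr => i _; rewrite linearZl_LR.
Qed.

Lemma bilin_expandr (B : {bilinear vT -> vT -> vT}) u v :
  B u v = \sum_(j < 64) v 0 j *: B u 'e_j.
Proof.
rewrite {1}(row_sum_delta v) linear_sumr.
by apply: eq_bigr => j _; rewrite linearZr_LR.
Qed.

Definition trisum (x y z : vT) (T : 'I_64 -> 'I_64 -> 'I_64 -> vT) : vT :=
  \sum_(a < 64) \sum_(b < 64) \sum_(c < 64) x 0 a *: (y 0 b *: (z 0 c *: T a b c)).

Lemma eq_trisum x y z T1 T2 : (forall a b c, T1 a b c = T2 a b c) ->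
  trisum x y z T1 = trisum x y z T2.
Proof. by move=> eqT; do 3!(apply: eq_bigr => ? _); rewrite eqT. Qed.

Lemma trisumD x y z T1 T2 :
  trisum x y z (fun a b c => T1 a b c + T2 a b c) = trisum x y z T1 + trisum x y z T2.
Proof.
by rewrite -!big_split; do 3!(apply: eq_bigr => ? _; rewrite -?big_split); rewrite !scalerDr.
Qed.

Lemma assoc_l_expand (B1 B2 : {bilinear vT -> vT -> vT}) x y z :
  B1 (B2 x y) z = trisum x y z (fun a b c => B1 (B2 'e_a 'e_b) 'e_c).
Proof.
rewrite (bilin_expandl B2) linear_sumlz; apply: eq_bigr => a _.
rewrite linearZl_LR (bilin_expandr B2) linear_sumlz scaler_sumr; apply: eq_bigr => b _.
by rewrite linearZl_LR (bilin_expandr B1) !scaler_sumr.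
Qed.

Lemma assoc_r_expand (B1 B2 : {bilinear vT -> vT -> vT}) x y z :
  B1 x (B2 y z) = trisum x y z (fun a b c => B1 'e_a (B2 'e_b 'e_c)).
Proof.
rewrite (bilin_expandl B1); apply: eq_bigr => a _.
rewrite (bilin_expandl B2) linear_sumr scaler_sumr; apply: eq_bigr => b _.
rewrite linearZr_LR (bilin_expandr B2) linear_sumr !scaler_sumr; apply: eq_bigr => c _.
by rewrite linearZr_LR.
Qed.

Lemma dendriform_basis_vec (a b c : 'I_64) (x := 'e_a) (y := 'e_b) (z := 'e_c) :
  [/\ vprec (vsucc x y) z = vsucc x (vprec y z),
      vprec (vprec x y) z = vprec x (vprec y z) + vprec x (vsucc y z) &
      vsucc x (vsucc y z) = vsucc (vsucc x y) z + vsucc (vprec x y) z].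
Proof.
have /and3P[h1 h2 h3] := dendriform_at_basis (mem_bas a) (mem_bas b) (mem_bas c).
rewrite /x /y /z -!vec_basis !bilin_vec -!vec_cat.
by split; apply: vec_perm.
Qed.

Lemma model_dendriform : is_dendriform vprec vsucc.
Proof.
split; do ?by move=> *; rewrite ?linearPl ?linearPr.
split=> x y z.
- rewrite assoc_l_expand assoc_r_expand; apply: eq_trisum => a b c.
  by case: (dendriform_basis_vec a b c).
- rewrite assoc_l_expand !assoc_r_expand -trisumD; apply: eq_trisum => a b c.
  by case: (dendriform_basis_vec a b c).
- rewrite !assoc_l_expand assoc_r_expand -trisumD; apply: eq_trisum => a b c.
  by case: (dendriform_basis_vec a b c).
Qed.

Lemma evalmon_model (m : 'I_75) :
  evalmon vprec vsucc m (vec gen) (vec gen) (vec gen) (vec gen) (vec gen) = vec (model_mon m).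
Proof. by symmetry; apply: evalmonT_morph => s1 s2; rewrite bilin_vec. Qed.

Lemma in_ker_d_model (c : 'rV[F]_75) :
  in_ker_d c -> c *m \matrix_(m < 75, i < 64) (count_mem (bas i) (model_mon m))%:R = 0.
Proof.
move/(_ _ _ _ model_dendriform (vec gen) (vec gen) (vec gen) (vec gen) (vec gen)).
under eq_bigr do rewrite evalmon_model.
move=> /rowP comb0; apply/rowP => i; have := comb0 i; rewrite !mxE summxE => comb0i.
by rewrite -[X in _ = X]comb0i; apply: eq_bigr => m _; rewrite !mxE.
Qed.
End Model.

(** * Integer certificates *)

Definition isum (n : nat) (h : nat -> int) : int := foldr (fun k s => h k + s) 0 (iota 0 n).
Definition mulf n (f g : nat -> nat -> int) (i j : nat) : int := isum n (fun k => f i k * g k j).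
Definition idf (i j : nat) : int := (i == j)%:Z.
Definition eq_on m n (f g : nat -> nat -> int) : bool :=
  all (fun i => all (fun j => f i j == g i j) (iota 0 n)) (iota 0 m).

Definition table (t : seq (seq int)) (i j : nat) : int := nth 0 (nth [::] t i) j.
Definition tabulate m n (f : nat -> nat -> int) : seq (seq int) := mkseq (fun i => mkseq (f i) n) m.
Definition sparse (s : seq (nat * nat * int)) (i j : nat) : int :=
  foldr (fun e c => (if (e.1.1 == i) && (e.1.2 == j) then e.2 else 0) + c) 0 s.

Lemma table_tabulate m n f i j : (i < m)%N -> (j < n)%N -> table (tabulate m n f) i j = f i j.
Proof. by move=> lt_i lt_j; rewrite /table nth_mkseq // nth_mkseq. Qed.

Section IntMatrices.
Variable F : fieldType.

Definition intmx m n (f : nat -> nat -> int) : 'M[F]_(m, n) := \matrix_(i < m, j < n) (f i j)%:~R.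

Lemma intmx_mul m n p f g : intmx m n f *m intmx n p g = intmx m p (mulf n f g).
Proof.
apply/matrixP => i j; rewrite !mxE /mulf /isum.
under eq_bigr do rewrite !mxE -intrM.
rewrite -(big_mkord xpredT (fun k => (f i k * g k j)%:~R)) /index_iota subn0.
by elim: (iota 0 n) => [|k s IHs]; rewrite ?big_nil // big_cons IHs intrD.
Qed.

Lemma intmx_add m n f g : intmx m n f + intmx m n g = intmx m n (fun i j => f i j + g i j).
Proof. by apply/matrixP => i j; rewrite !mxE intrD. Qed.

Lemma intmx_eq_on m n f g : eq_on m n f g -> intmx m n f = intmx m n g.
Proof.
move=> fg; apply/matrixP => i j; rewrite !mxE.
have /allP/(_ j) : all (fun j => f i j == g i j) (iota 0 n).
  by apply: (allP fg); rewrite mem_iota ltn_ord.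
by rewrite mem_iota ltn_ord => /(_ isT)/eqP ->.
Qed.

Lemma intmx_idf n : intmx n n idf = 1%:M.
Proof. by apply/matrixP => i j; rewrite !mxE /idf -val_eqE; case: eqP. Qed.

Lemma intmx_tabulate m n f : intmx m n (table (tabulate m n f)) = intmx m n f.
Proof. by apply/matrixP => i j; rewrite !mxE table_tabulate. Qed.
End IntMatrices.

(* Y (75 x 33) and Z (64 x 75) with R Y = 1 and Y R + E Z = 1, where R and E are
   [rel_table] and [eval_table] below. *)
Definition certY_entries : seq (nat * nat * int) := [::
  (25, 0, -1); (25, 1, -1); (25, 2, -1); (25, 3, -1); (25, 30, 1); (27, 11, 1); (27, 14, -1);
  (27, 29, -1); (28, 4, 1); (28, 7, -1); (28, 27, -1); (28, 28, 1); (29, 4, -1); (38, 15, -1);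
  (38, 16, 1); (38, 21, -1); (39, 12, 1); (39, 19, -1); (39, 22, 1); (39, 31, -1); (40, 9, -1);
  (42, 17, -1); (43, 23, -1); (44, 6, -1); (48, 13, -1); (49, 25, -1); (51, 14, -1); (53, 14, -1);
  (53, 29, -1); (54, 14, 1); (54, 18, -1); (56, 19, -1); (58, 12, -1); (59, 19, 1); (59, 20, -1);
  (60, 8, -1); (61, 15, -1); (62, 15, 1); (62, 16, -1); (63, 12, 1); (63, 15, -1); (63, 16, 1);
  (63, 19, -1); (63, 21, -1); (63, 31, -1); (64, 5, -1); (65, 7, -1); (66, 0, -1); (67, 2, -1);
  (68, 17, -1); (68, 24, -1); (69, 10, -1); (70, 27, -1); (71, 1, -1); (72, 3, -1); (73, 13, -1);
  (73, 23, -1); (73, 32, -1); (74, 26, -1)].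
Definition certZ_entries : seq (nat * nat * int) := [::
  (22, 6, 1); (22, 34, -1); (22, 55, -1); (23, 57, 1); (24, 55, 1); (25, 6, -1); (25, 31, 1);
  (25, 34, 1); (25, 55, 1); (25, 57, -1); (26, 32, 1); (26, 55, -1); (27, 7, 1); (27, 33, -1);
  (28, 7, -1); (28, 30, 1); (28, 33, 1); (29, 34, 1); (30, 33, 1); (31, 36, 1); (32, 37, 1);
  (33, 35, 1); (34, 6, 1); (34, 11, 1); (34, 31, -1); (34, 32, -1); (34, 34, -1); (34, 36, -1);
  (34, 37, -1); (35, 7, 1); (35, 12, 1); (35, 30, -1); (35, 33, -1); (35, 35, -1); (36, 5, 1);
  (36, 50, -1); (37, 52, 1); (38, 50, 1); (39, 5, -1); (39, 26, 1); (39, 50, 1); (39, 52, -1);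
  (40, 5, 1); (40, 10, 1); (40, 26, -1); (40, 50, -1); (41, 9, 1); (42, 14, 1); (43, 8, 1);
  (44, 13, 1); (45, 1, 1); (46, 2, 1); (47, 0, 1); (48, 4, 1); (49, 3, 1); (50, 46, 1);
  (51, 47, 1); (52, 45, 1); (53, 21, 1); (53, 46, -1); (53, 47, -1); (54, 22, 1); (54, 45, -1);
  (55, 41, 1); (56, 20, 1); (56, 41, -1); (57, 24, 1); (58, 23, 1); (59, 16, 1); (60, 17, 1);
  (61, 15, 1); (62, 19, 1); (63, 18, 1)].

Definition rel_coef (l : seq (bool * (nat * nat * nat))) (m : nat) : int :=
  foldr (fun q c => (if term_idx q == m then if q.1 then 1 else -1 else 0) + c) 0 l.

Lemma rel_row_entry (F : fieldType) l (m : 'I_75) :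
  all (fun q => term_idx q < 75)%N l -> rel_row F l 0 m = (rel_coef l m)%:~R.
Proof.
rewrite rel_rowE summxE; elim: l => [|q l IHl] /=; first by rewrite big_nil.
by case/andP=> lt_q lt_l; rewrite big_cons IHl // signed_mon_entry // intrD.
Qed.

Definition rel_table : seq (seq int) :=
  tabulate 33 75 (fun r => rel_coef (nth [::] rel_terms r)).
Definition eval_table : seq (seq int) :=
  [seq [seq (count_mem t (model_mon m))%:Z | t <- basis] | m <- iota 0 75].

Definition certificate_ok (R Y E Z : seq (seq int)) : bool :=
  eq_on 33 33 (mulf 75 (table R) (table Y)) idf &&
  eq_on 75 75 (fun i j => mulf 33 (table Y) (table R) i j + mulf 64 (table E) (table Z) i j) idf.

Lemma certificate : certificate_ok rel_table (tabulate 75 33 (sparse certY_entries)) eval_table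
  (tabulate 64 75 (sparse certZ_entries)).
Proof. by vm_compute. Qed.

Lemma relmx_int (F : fieldType) : relmx F = intmx F 33 75 (table rel_table).
Proof.
rewrite intmx_tabulate; apply/matrixP => r m.
rewrite !mxE rels33_terms (nth_map [::]) // rel_row_entry //.
by apply/allP => q q_l; apply: (allP rel_terms_idx); apply/flattenP; exists (nth [::] rel_terms r);
  rewrite ?mem_nth.
Qed.

Lemma eval_table_mx (F : fieldType) :
  intmx F 75 64 (table eval_table) =
  \matrix_(m < 75, i < 64) (count_mem (nth Leaf basis i) (model_mon m))%:R.
Proof.
apply/matrixP => m i; rewrite !mxE /table /eval_table (nth_map 0%N) ?size_iota //.
by rewrite nth_iota // (nth_map Leaf) ?size_basis.
Qed.

Theorem theorem5p1 (F : fieldType) (charF0 : [pchar F] =i pred0) :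
  row_free (relmx F) /\ \rank (relmx F) = 33%N /\
  (forall c : 'rV[F]_75, in_ker_d c <-> (c <= relmx F)%MS).
Proof.
set Y := intmx F 75 33 (table (tabulate 75 33 (sparse certY_entries))).
set E := intmx F 75 64 (table eval_table).
set Z := intmx F 64 75 (table (tabulate 64 75 (sparse certZ_entries))).
have /andP[RY_int cert_int] := certificate.
have RY : relmx F *m Y = 1%:M by rewrite relmx_int intmx_mul (intmx_eq_on _ RY_int) intmx_idf.
have YR_EZ : Y *m relmx F + E *m Z = 1%:M.
  by rewrite relmx_int !intmx_mul intmx_add (intmx_eq_on _ cert_int) intmx_idf.
have free : row_free (relmx F) by apply/row_freeP; exists Y.
split; first exact: free.
split; first exact/eqP.
move=> c; split=> [/in_ker_d_model cE0 | /submxP[u ->]]; last first.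
  exact/in_ker_d_mulmx/relmx_row_ker.
apply/submxP; exists (c *m Y); rewrite -mulmxA -[c in LHS]mulmx1 -YR_EZ mulmxDr.
by rewrite [c *m (E *m Z)]mulmxA /E eval_table_mx cE0 mul0mx addr0.
Qed.
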